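(* Let $\Gamma$ be a metric graph and let $D$ be a vertex-supported effective divisor on $\Gamma$ with $d=\deg(D)$. Then the dimension of the cell complex $|D|$ is at most $d$. In addition, if $\Gamma$ is $2$-connected, then the dimension of the cell complex $|D|$ is at most $d-1$.
   Context: A metric graph $\Gamma=(V,E)$ is a connected undirected graph (loops and parallel edges allowed) whose edges have positive real lengths $M_e$; each edge is viewed as a real segment. A divisor is a finite formal $\mathbb{Z}$-combination $D=\sum_{x\in\Gamma}D(x)\cdot x$ of points of $\Gamma$; it is effective if all $D(x)\ge 0$, its degree is $\sum_x D(x)$, its support is $\{x: D(x)\neq 0\}$, and it is vertex-supported if its support is contained in $V$. A rational function is a continuous $f:\Gamma\to\mathbb{R}$, piecewise linear on each edge with finitely many pieces and integer slopes; $\mathrm{ord}_x(f)$ is the sum of the outgoing slopes of $f$ at $x$ over all directions at $x$, and $(f)=\sum_x \mathrm{ord}_x(f)\cdot x$. $R(D)$ is the set of rational functions $f$ with $D+(f)$ effective, and the linear system is $|D|=\{D+(f): f\in R(D)\}$. Cell structure of $|D|$: identify each open edge $e$ with $(0,M_e)$ (fixing an orientation). A cell is specified by data: a nonnegative integer $d_v$ for each $v\in V$; for some edges $e$ an ordered partition $d_e=\sum_{i=1}^{r_e}d_e^i$ into positive integers; and an integer $m_e$ for each $e\in E$. A divisor $L\in|D|$ lies in this cell iff $L(v)=d_v$ for all $v\in V$; on each edge $e$ with a partition, $L$ restricted to the interior of $e$ equals $\sum_{i=1}^{r_e}d_e^i x_i$ with $0<x_1<\dots<x_{r_e}<M_e$,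 while on other edges $L$ vanishes at all interior points; and for any $f\in R(D)$ with $L=D+(f)$, the outgoing slope of $f$ at the point $0$ of $e$ is $m_e$ for each $e$. Any $L$ in a cell is called a representative of it. For a cell $C$ with representative $L$, setting $I_L=\{x\in\Gamma\setminus V: L(x)>0\}$, the dimension of $C$ equals one less than the number of connected components of $\Gamma\setminus I_L$ (a known fact from Haase–Musiker–Yu). The dimension of $|D|$ is the maximum dimension of its cells. *)

From Stdlib Require Import Reals ZArith List ClassicalEpsilon Relation_Operators.
From mathcomp Require Import all_boot.
Set Implicit Arguments. Unset Strict Implicit.
Local Open Scope R_scope.

(** The open edge e is identified with (0, mlen e). *)
Record mgraph := MGraph {
  mV : finType;
  mE : finType;
  msrc : mE -> mV;
  mtgt : mE -> mV;
  mlen : mE -> R;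
  mlen_pos : forall e, (0 < mlen e) }.

(** Points of Gamma: a vertex, or a parameter t on an edge e
    (a genuine point only when 0 < t < mlen e, see [valid]). *)
Inductive point (G : mgraph) : Type :=
| PV : mV G -> point G
| PE : mE G -> R -> point G.
Arguments PV {G}.
Arguments PE {G}.

Definition valid (G : mgraph) (x : point G) : Prop :=
  match x with PV _ => True | PE e t => (0 < t < mlen e) end.

Definition edgefun (G : mgraph) (f : point G -> R) (e : mE G) (t : R) : R :=
  if Rle_dec t 0 then f (PV (msrc e))
  else if Rle_dec (mlen e) t then f (PV (mtgt e)) else f (PE e t).

Definition pl_int (g : R -> R) (a b : R) : Prop :=
  exists (n : nat) (ts : nat -> R) (ss : nat -> Z),
    ts 0%nat = a /\ ts n = b /\
    (forall i : nat, (i < n)%nat -> (ts i < ts i.+1)) /\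
    (forall (i : nat) (t : R), (i < n)%nat -> (ts i <= t <= ts i.+1) ->
        g t = (g (ts i) + IZR (ss i) * (t - ts i))).

(** Rational functions on Gamma (continuity is built in: on each closed edge
    the function is piecewise linear and agrees with the vertex values). *)
Definition rational (G : mgraph) (f : point G -> R) : Prop :=
  forall e : mE G, pl_int (edgefun f e) 0 (mlen e).

Definition rslope (g : R -> R) (t : R) : Z :=
  epsilon (inhabits 0%Z) (fun s => exists eps : R, (0 < eps) /\
     forall h : R, (0 < h < eps) -> g (t + h) = (g t + IZR s * h)).
Definition lslope (g : R -> R) (t : R) : Z :=
  epsilon (inhabits 0%Z) (fun s => exists eps : R, (0 < eps) /\
     forall h : R, (0 < h < eps) -> g (t - h) = (g t + IZR s * h)).

Definition ord (G : mgraph) (f : point G -> R) (x : point G) : Z :=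
  match x with
  | PE e t => (rslope (edgefun f e) t + lslope (edgefun f e) t)%Z
  | PV v => (\big[Z.add/0%Z]_(e : mE G | msrc e == v) rslope (edgefun f e) 0
           + \big[Z.add/0%Z]_(e : mE G | mtgt e == v) lslope (edgefun f e) (mlen e))%Z
  end.

(** Divisors are functions point -> Z (only values at valid points matter). *)
Definition effective (G : mgraph) (D : point G -> Z) : Prop :=
  forall x, valid x -> (0 <= D x)%Z.

Definition vertex_supported (G : mgraph) (D : point G -> Z) : Prop :=
  forall x, valid x -> D x <> 0%Z -> exists v, x = PV v.

Definition is_degree (G : mgraph) (D : point G -> Z) (d : Z) : Prop :=
  exists l : list (point G),
    List.NoDup l /\ (forall x, List.In x l -> valid x) /\
    (forall x, valid x -> D x <> 0%Z -> List.In x l) /\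
    d = List.fold_right (fun x acc => (D x + acc)%Z) 0%Z l.

Definition in_linsys (G : mgraph) (D L : point G -> Z) : Prop :=
  exists f : point G -> R, rational f /\
    (forall x, valid x -> L x = (D x + ord f x)%Z) /\ effective L.

Definition IL (G : mgraph) (L : point G -> Z) (x : point G) : Prop :=
  valid x /\ (exists e t, x = PE e t) /\ (0 < L x)%Z.

Definition avoids (G : mgraph) (S : point G -> Prop) (x : point G) : Prop :=
  valid x /\ ~ S x.

Definition step (G : mgraph) (S : point G -> Prop) (x y : point G) : Prop :=
  avoids S x /\ avoids S y /\
  exists (e : mE G) (t : R), x = PE e t /\
   ( (exists t', y = PE e t' /\
        forall s, (Rmin t t' <= s <= Rmax t t') -> ~ S (PE e s))
   \/ (y = PV (msrc e) /\ forall s, (0 < s <= t) -> ~ S (PE e s))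
   \/ (y = PV (mtgt e) /\ forall s, (t <= s < mlen e) -> ~ S (PE e s))).

Definition conn (G : mgraph) (S : point G -> Prop) : point G -> point G -> Prop :=
  clos_refl_sym_trans _ (step S).

Definition has_ncomponents (G : mgraph) (S : point G -> Prop) (k : nat) : Prop :=
  exists reps : list (point G),
    List.length reps = k /\ List.NoDup reps /\
    (forall r, List.In r reps -> avoids S r) /\
    (forall r1 r2, List.In r1 reps -> List.In r2 reps -> conn S r1 r2 -> r1 = r2) /\
    (forall x, avoids S x -> exists r, List.In r reps /\ conn S x r).

(** dim |D| <= m : every L in |D| lies in a cell of dimension
    (#components of Gamma \ I_L) - 1 <= m (Haase--Musiker--Yu). *)
Definition linsys_dim_le (G : mgraph) (D : point G -> Z) (m : Z) : Prop :=
  forall L, in_linsys D L ->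
    exists k : nat, has_ncomponents (IL L) k /\ (Z.of_nat k - 1 <= m)%Z.

Definition gconnected (G : mgraph) : Prop :=
  forall x y : point G, valid x -> valid y -> conn (fun _ => False) x y.

Definition two_connected (G : mgraph) : Prop :=
  gconnected G /\
  forall z : point G, valid z ->
    forall x y, avoids (fun p => p = z) x -> avoids (fun p => p = z) y ->
      conn (fun p => p = z) x y.

(* For [L = D + (f)] in [|D|], the set [I_L] has at most [deg L = d] points: the principal
   divisor [(f)] has degree 0, [L] is nonnegative everywhere and at least 1 on [I_L].
   Removing finitely many interior points one at a time from a connected metric graph creates
   at most one new component per point, so [Γ \ I_L] has at most [d + 1] components; when [Γ]
   is 2-connected the first removed point creates none, leaving at most [d]. *)

From Stdlib Require Import Reals ZArith Lra Lia List ClassicalEpsilon Relation_Operators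
  Permutation FinFun FunctionalExtensionality PropExtensionality.
From mathcomp Require Import ssreflect ssrbool eqtype ssrnat fintype bigop.
From mathcomp Require seq.
Import (canonicals) seq.
From mathcomp Require Import zify.
From HB Require Import structures.
Set Implicit Arguments. Unset Strict Implicit.
Local Open Scope R_scope.

(* The same fold as the degree in [is_degree], so the two agree by conversion. *)
Definition sumZ {X : Type} (l : list X) (w : X -> Z) : Z :=
  fold_right (fun x acc => (w x + acc)%Z) 0%Z l.

Lemma sumZ_app {X} (l1 l2 : list X) w : sumZ (l1 ++ l2) w = (sumZ l1 w + sumZ l2 w)%Z.
Proof. induction l1; simpl; auto. rewrite IHl1. lia. Qed.

Lemma sumZ_map {X Y} (f : X -> Y) (l : list X) w : sumZ (map f l) w = sumZ l (fun x => w (f x)).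
Proof. induction l; simpl; auto. rewrite IHl. auto. Qed.

Lemma sumZ_ext {X} (l : list X) w1 w2 :
  (forall x, In x l -> w1 x = w2 x) -> sumZ l w1 = sumZ l w2.
Proof. induction l; simpl; intros H; auto. rewrite H; auto. rewrite IHl; auto. Qed.

Lemma sumZ_le {X} (l : list X) w1 w2 :
  (forall x, In x l -> (w1 x <= w2 x)%Z) -> (sumZ l w1 <= sumZ l w2)%Z.
Proof.
  induction l as [|x l IH]; simpl; intros H; [lia|].
  assert (Hx := H x (or_introl Logic.eq_refl)). assert (IH' := IH (fun y Hy => H y (or_intror Hy))).
  lia.
Qed.

Lemma sumZ_opp {X} (l : list X) w : sumZ l (fun x => (- w x)%Z) = (- sumZ l w)%Z.
Proof. induction l; simpl; auto. rewrite IHl. lia. Qed.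

Lemma sumZ_ge_length {X} (l : list X) w :
  (forall x, In x l -> (1 <= w x)%Z) -> (Z.of_nat (length l) <= sumZ l w)%Z.
Proof.
  induction l as [|x l IH]; simpl; intros H; [lia|].
  assert (Hx := H x (or_introl Logic.eq_refl)). assert (IH' := IH (fun y Hy => H y (or_intror Hy))).
  lia.
Qed.

Lemma sumZ_nonneg {X} (l : list X) w : (forall x, In x l -> (0 <= w x)%Z) -> (0 <= sumZ l w)%Z.
Proof.
  induction l as [|x l IH]; simpl; intros H; [lia|].
  assert (Hx := H x (or_introl Logic.eq_refl)). assert (IH' := IH (fun y Hy => H y (or_intror Hy))).
  lia.
Qed.

Lemma sumZ_le_support {X} (a b : list X) (w : X -> Z) : NoDup a ->
  (forall x, In x a -> w x <> 0%Z -> In x b) -> (forall x, In x b -> (0 <= w x)%Z) ->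
  (sumZ a w <= sumZ b w)%Z.
Proof.
  revert b. induction a as [|x a IH]; intros b Hnd Hab Hb; simpl; [exact: sumZ_nonneg|].
  inversion Hnd as [|? ? Hx Hnd']; subst.
  destruct (Z.eq_dec (w x) 0) as [H0|H0].
  - rewrite H0. apply IH; auto. intros y Hy. apply Hab; simpl; auto.
  - destruct (in_split x b) as [b1 [b2 ->]]; [apply Hab; simpl; auto|].
    assert (IH' : (sumZ a w <= sumZ (b1 ++ b2) w)%Z).
    { apply IH; auto.
      - intros y Hy Hw. assert (Hyb : In y (b1 ++ x :: b2)) by (apply Hab; simpl; auto).
        apply in_app_or in Hyb. apply in_or_app. destruct Hyb as [Hyb|[<-|Hyb]]; tauto.
      - intros y Hy. apply Hb. apply in_app_or in Hy. apply in_or_app. simpl; tauto. }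
    rewrite sumZ_app in IH'. rewrite sumZ_app. simpl. lia.
Qed.

Lemma sumZ_seq_telescope (ss : nat -> Z) (j k : nat) (w : nat -> Z) :
  (forall i, In i (List.seq j.+1 k) -> w i = (ss i - ss i.-1)%Z) ->
  sumZ (List.seq j.+1 k) w = (ss (j + k)%nat - ss j)%Z.
Proof.
  revert j. induction k as [|k IH]; intros j H; simpl.
  - rewrite addn0. lia.
  - rewrite (H j.+1) /=; [|auto]. rewrite IH; [|intros i Hi; apply H; simpl; auto].
    rewrite addnS -addSn. lia.
Qed.

Lemma In_mem (T : eqType) (x : T) (s : list T) : In x s <-> x \in s.
Proof.
  induction s as [|y s IH]; [by []|]. rewrite seq.in_cons /=. split.
  - move=> [->|/IH ->]; [by rewrite eqxx|by rewrite orbT].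
  - move=> /orP [/eqP ->|/IH]; auto.
Qed.

Lemma uniq_NoDup (T : eqType) (s : list T) : seq.uniq s -> NoDup s.
Proof.
  induction s as [|x s IH]; simpl; [constructor|].
  move=> /andP [Hx Hu]. constructor; auto. by rewrite In_mem; apply/negP.
Qed.

Definition pl_pieces (g : R -> R) (n : nat) (ts : nat -> R) (ss : nat -> Z) : Prop :=
  (forall i : nat, (i < n)%nat -> ts i < ts i.+1) /\
  (forall (i : nat) (t : R), (i < n)%nat -> ts i <= t <= ts i.+1 ->
     g t = g (ts i) + IZR (ss i) * (t - ts i)).

Lemma slope_unique (g : R -> R) (t sg : R) (s1 s2 : Z) :
  (exists eps, 0 < eps /\ forall h, 0 < h < eps -> g (t + sg * h) = g t + IZR s1 * h) ->
  (exists eps, 0 < eps /\ forall h, 0 < h < eps -> g (t + sg * h) = g t + IZR s2 * h) ->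
  s1 = s2.
Proof.
  intros [e1 [He1 H1]] [e2 [He2 H2]].
  set (h := Rmin e1 e2 / 2).
  assert (Hm1 := Rmin_l e1 e2). assert (Hm2 := Rmin_r e1 e2).
  assert (0 < Rmin e1 e2) by (apply Rmin_glb_lt; lra).
  assert (A1 := H1 h ltac:(unfold h; lra)). assert (A2 := H2 h ltac:(unfold h; lra)).
  apply eq_IZR. apply Rmult_eq_reg_r with h; [lra|unfold h; lra].
Qed.

Lemma rslope_eq (g : R -> R) (t : R) (s : Z) :
  (exists eps, 0 < eps /\ forall h, 0 < h < eps -> g (t + h) = g t + IZR s * h) ->
  rslope g t = s.
Proof.
  intros Hs. unfold rslope.
  match goal with |- epsilon ?i ?P = _ => assert (HP : P (epsilon i P)) end.
  { apply epsilon_spec. exists s. exact Hs. }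
  apply (@slope_unique g t 1); [destruct HP as [eps [H1 H2]]|destruct Hs as [eps [H1 H2]]];
    exists eps; split; auto; intros h Hh; rewrite Rmult_1_l; auto.
Qed.

Lemma lslope_eq (g : R -> R) (t : R) (s : Z) :
  (exists eps, 0 < eps /\ forall h, 0 < h < eps -> g (t - h) = g t + IZR s * h) ->
  lslope g t = s.
Proof.
  intros Hs. unfold lslope.
  match goal with |- epsilon ?i ?P = _ => assert (HP : P (epsilon i P)) end.
  { apply epsilon_spec. exists s. exact Hs. }
  apply (@slope_unique g t (-1)); [destruct HP as [eps [H1 H2]]|destruct Hs as [eps [H1 H2]]];
    exists eps; split; auto; intros h Hh;
    replace (t + -1 * h) with (t - h) by ring; auto.
Qed.

Section PiecewiseLinear.
Variables (g : R -> R) (n : nat) (ts : nat -> R) (ss : nat -> Z).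
Hypothesis g_pl : pl_pieces g n ts ss.

Lemma pl_rslope i : (i < n)%nat -> rslope g (ts i) = ss i.
Proof.
  destruct g_pl as [Hinc Hlin]. intros Hi. apply rslope_eq.
  assert (Hlt := Hinc i Hi).
  exists (ts i.+1 - ts i). split; [lra|]. intros h Hh.
  rewrite (Hlin i (ts i + h) Hi); [ring|lra].
Qed.

Lemma pl_lslope i : (i < n)%nat -> lslope g (ts i.+1) = (- ss i)%Z.
Proof.
  destruct g_pl as [Hinc Hlin]. intros Hi. apply lslope_eq.
  assert (Hlt := Hinc i Hi).
  exists (ts i.+1 - ts i). split; [lra|]. intros h Hh.
  rewrite (Hlin i (ts i.+1 - h) Hi); [|lra].
  rewrite (Hlin i (ts i.+1) Hi); [|lra]. rewrite opp_IZR. ring.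
Qed.

Lemma pl_smooth i t : (i < n)%nat -> ts i < t < ts i.+1 ->
  (rslope g t + lslope g t = 0)%Z.
Proof.
  destruct g_pl as [Hinc Hlin]. intros Hi Ht.
  rewrite (@rslope_eq g t (ss i)) ?(@lslope_eq g t (- ss i)); [lia| |].
  - exists (t - ts i). split; [lra|]. intros h Hh.
    rewrite (Hlin i (t - h) Hi); [|lra]. rewrite (Hlin i t Hi); [|lra].
    rewrite opp_IZR. ring.
  - exists (ts i.+1 - t). split; [lra|]. intros h Hh.
    rewrite (Hlin i (t + h) Hi); [|lra]. rewrite (Hlin i t Hi); [ring|lra].
Qed.

Lemma pl_nodes_lt i j : (i < j)%nat -> (j <= n)%nat -> ts i < ts j.
Proof.
  destruct g_pl as [Hinc _]. intros Hij. induction j as [|j IH]; [lia|]. intros Hj.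
  assert (Hs := Hinc j ltac:(lia)).
  destruct (Nat.eq_dec i j) as [->|Hne]; [exact Hs|].
  assert (IH' := IH ltac:(lia) ltac:(lia)). lra.
Qed.

Lemma pl_point_cases t : ts 0%nat < t < ts n ->
  (exists i, (0 < i < n)%nat /\ t = ts i) \/ (exists i, (i < n)%nat /\ ts i < t < ts i.+1).
Proof.
  induction n as [|m IH]; intros Ht; [lra|].
  destruct g_pl as [Hinc Hlin].
  destruct (Rtotal_order t (ts m)) as [Hlt|[Heq|Hgt]].
  - destruct m as [|m]; [right; exists 0%nat; split; [lia|lra]|].
    destruct IH as [[i [Hi ->]]|[i [Hi Hti]]];
      [split; intros; [apply Hinc|apply Hlin]; auto; lia|lra| |].
    + left. exists i. split; [lia|auto].
    + right. exists i. split; [lia|auto].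
  - destruct m as [|m]; [lra|]. left. exists m.+1. split; [lia|auto].
  - right. exists m. split; [lia|split; lra].
Qed.

End PiecewiseLinear.

Lemma pl_int_kinks (g : R -> R) (a b : R) : a < b -> pl_int g a b ->
  exists ks : list R,
    (forall t, In t ks -> a < t < b) /\
    (forall t, a < t < b -> (rslope g t + lslope g t <> 0)%Z -> In t ks) /\
    (rslope g a + lslope g b + sumZ ks (fun t => rslope g t + lslope g t) = 0)%Z.
Proof.
  intros Hab [n [ts [ss [<- [<- Hpl]]]]].
  assert (Hn : (0 < n)%nat) by (destruct n; [lra|lia]).
  exists (map ts (List.seq 1 n.-1)). split; [|split].
  - intros t Ht. apply in_map_iff in Ht. destruct Ht as [i [<- Hi]]. apply in_seq in Hi.
    split; apply (pl_nodes_lt Hpl); lia.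
  - intros t Ht Hk. destruct (pl_point_cases Hpl Ht) as [[i [Hi ->]]|[i [Hi Hti]]].
    + apply in_map. apply in_seq. lia.
    + exfalso. exact (Hk (pl_smooth Hpl Hi Hti)).
  - rewrite sumZ_map (@sumZ_seq_telescope ss 0 n.-1).
    + have Hlast : ts n = ts (n.-1).+1 by rewrite prednK.
      rewrite add0n Hlast (pl_rslope Hpl Hn) (pl_lslope Hpl); lia.
    + intros i Hi. apply in_seq in Hi.
      have Hi' : ts i = ts (i.-1).+1 by rewrite prednK //; lia.
      rewrite (pl_rslope Hpl); [|lia]. rewrite Hi' (pl_lslope Hpl); lia.
Qed.

Definition interior_point (G : mgraph) (x : point G) : Prop :=
  exists e t, x = PE e t /\ 0 < t < mlen e.

Definition end_slopes (G : mgraph) (f : point G -> R) (e : mE G) : Z :=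
  (rslope (edgefun f e) 0 + lslope (edgefun f e) (mlen e))%Z.

Lemma rational_kinks (G : mgraph) (f : point G -> R) (l : list (mE G)) : rational f ->
  exists B : list (point G),
    (forall x, In x B -> interior_point x) /\
    (forall e t, In e l -> 0 < t < mlen e -> ord f (PE e t) <> 0%Z -> In (PE e t) B) /\
    (sumZ B (ord f) + sumZ l (end_slopes f) = 0)%Z.
Proof.
  intros Hf. induction l as [|e l IH].
  - exists nil. split; [intros x []|split; [intros e t []|reflexivity]].
  - destruct IH as [B [HBint [HBkink HBsum]]].
    destruct (pl_int_kinks (mlen_pos e) (Hf e)) as [ks [Hks_in [Hks_kink Hks_sum]]].
    exists (map (PE e) ks ++ B). split; [|split].
    + intros x Hx. apply in_app_or in Hx. destruct Hx as [Hx|Hx]; auto.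
      apply in_map_iff in Hx. destruct Hx as [t [<- Ht]]. exists e, t. auto.
    + intros e' t [<-|He'] Ht Hord; apply in_or_app; [left|right; auto].
      apply in_map. exact: Hks_kink.
    + rewrite sumZ_app sumZ_map /=. unfold end_slopes at 1. simpl ord. lia.
Qed.

HB.instance Definition _ := Monoid.isComLaw.Build Z 0%Z Z.add Z.add_assoc Z.add_comm Z.add_0_l.

Lemma bigZ_sumZ {I : Type} (s : list I) (F : I -> Z) : \big[Z.add/0%Z]_(i <- s) F i = sumZ s F.
Proof. induction s; [by rewrite big_nil|]. by rewrite big_cons IHs. Qed.

Lemma big_incidence (V E : finType) (src tgt : E -> V) (F1 F2 : E -> Z) :
  \big[Z.add/0%Z]_(v : V)
     (\big[Z.add/0%Z]_(e | src e == v) F1 e + \big[Z.add/0%Z]_(e | tgt e == v) F2 e)%Z =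
  \big[Z.add/0%Z]_(e : E) (F1 e + F2 e)%Z.
Proof.
  have Hpart (h : E -> V) (F : E -> Z) :
    \big[Z.add/0%Z]_(v : V) \big[Z.add/0%Z]_(e | h e == v) F e = \big[Z.add/0%Z]_(e : E) F e.
  { rewrite [RHS](partition_big h xpredT) //. }
  by rewrite !big_split /= !Hpart.
Qed.

Lemma sum_ord_vertices (G : mgraph) (f : point G -> R) :
  sumZ (index_enum (mV G)) (fun v => ord f (PV v)) = sumZ (index_enum (mE G)) (end_slopes f).
Proof. rewrite -!bigZ_sumZ. exact: big_incidence. Qed.

Lemma principal_divisor_degree0 (G : mgraph) (f : point G -> R) : rational f ->
  exists B : list (point G),
    (forall x, In x B -> interior_point x) /\
    (forall x, interior_point x -> ord f x <> 0%Z -> In x B) /\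
    (sumZ B (ord f) + sumZ (index_enum (mV G)) (fun v => ord f (PV v)) = 0)%Z.
Proof.
  intros Hf. destruct (rational_kinks (index_enum (mE G)) Hf) as [B [Hint [Hkink Hsum]]].
  exists B. rewrite sum_ord_vertices. split; [exact Hint|split; [|exact Hsum]].
  intros x [e [t [-> Ht]]]. apply Hkink; [|exact Ht]. rewrite In_mem. exact: mem_index_enum.
Qed.

Lemma interior_point_valid (G : mgraph) (x : point G) : interior_point x -> valid x.
Proof. by intros [e [t [-> Ht]]]. Qed.

Lemma vertex_supported_interior (G : mgraph) (D : point G -> Z) (x : point G) :
  vertex_supported D -> interior_point x -> D x = 0%Z.
Proof.
  intros Hvs Hx. destruct (Z.eq_dec (D x) 0) as [H|H]; [exact H|].
  destruct Hx as [e [t [-> Ht]]]. by destruct (Hvs (PE e t) Ht H).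
Qed.

Lemma vertex_sum_le_degree (G : mgraph) (D : point G -> Z) (d : Z) :
  effective D -> is_degree D d -> (sumZ (index_enum (mV G)) (fun v => D (PV v)) <= d)%Z.
Proof.
  intros Heff [l [Hnd [Hval [Hsupp ->]]]]. rewrite -(sumZ_map (@PV G)).
  apply sumZ_le_support.
  - apply Injective_map_NoDup; [by intros v w [=]|apply uniq_NoDup, index_enum_uniq].
  - intros x Hx Hne. apply in_map_iff in Hx. destruct Hx as [v [<- _]]. exact: Hsupp.
  - intros x Hx. exact: Heff (Hval x Hx).
Qed.

Lemma list_of_finite_pred {X : Type} (P : X -> Prop) (B : list X) :
  (forall x, P x -> In x B) -> exists s, NoDup s /\ (forall x, P x <-> In x s).
Proof.
  intros HB.
  pose dec (x y : X) := excluded_middle_informative (x = y).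
  pose test x := if excluded_middle_informative (P x) then true else false.
  exists (nodup dec (filter test B)). split; [apply NoDup_nodup|].
  intros x. rewrite nodup_In filter_In /test.
  destruct (excluded_middle_informative (P x)); split; try tauto; auto.
  by intros [_ ?].
Qed.

Lemma IL_length_le_degree (G : mgraph) (D L : point G -> Z) (d : Z) :
  effective D -> vertex_supported D -> is_degree D d -> in_linsys D L ->
  exists s, NoDup s /\ (forall x, IL L x <-> In x s) /\
    (forall x, In x s -> interior_point x) /\ (Z.of_nat (length s) <= d)%Z.
Proof.
  intros Heff Hvs Hdeg [f [Hf [HL HLeff]]].
  destruct (principal_divisor_degree0 Hf) as [B [HBint [HBkink HBsum]]].
  have HIL_interior x : IL L x -> interior_point x.
  { intros [Hv [[e [t ->]] _]]. by exists e, t. }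
  have HIL_B x : IL L x -> In x B.
  { intros Hx. pose proof (HIL_interior x Hx) as Hint. apply HBkink; [exact Hint|].
    destruct Hx as [Hv [_ Hpos]].
    rewrite HL // (vertex_supported_interior Hvs Hint) in Hpos. lia. }
  destruct (list_of_finite_pred HIL_B) as [s [Hnd Hs]].
  exists s. split; [exact Hnd|split; [exact Hs|split]].
  { intros x Hx. exact: HIL_interior (proj2 (Hs x) Hx). }
  have Hs_B : (Z.of_nat (length s) <= sumZ B L)%Z.
  { apply Z.le_trans with (sumZ s L).
    - apply sumZ_ge_length. intros x Hx. destruct (proj2 (Hs x) Hx) as [_ [_ Hpos]]. lia.
    - apply sumZ_le_support; [exact Hnd|intros x Hx _; exact: HIL_B (proj2 (Hs x) Hx)|].
      intros x Hx. exact: HLeff (interior_point_valid (HBint x Hx)). }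
  have HB_ord : sumZ B L = sumZ B (ord f).
  { apply sumZ_ext. intros x Hx. pose proof (HBint x Hx) as Hint.
    rewrite HL; [|exact: interior_point_valid]. rewrite (vertex_supported_interior Hvs Hint). lia. }
  have Hvert : (- sumZ (index_enum (mV G)) (fun v => ord f (PV v)) <=
                sumZ (index_enum (mV G)) (fun v => D (PV v)))%Z.
  { rewrite -sumZ_opp. apply sumZ_le. intros v _.
    have := HLeff (PV v) I. rewrite HL //. lia. }
  have := vertex_sum_le_degree Heff Hdeg. lia.
Qed.

Definition covers (G : mgraph) (S : point G -> Prop) (reps : list (point G)) : Prop :=
  (forall r, In r reps -> avoids S r) /\
  (forall x, avoids S x -> exists r, In r reps /\ conn S x r).

Lemma distinct_representatives (G : mgraph) (S : point G -> Prop) (R0 : list (point G)) :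
  (forall r, In r R0 -> avoids S r) ->
  exists reps, (length reps <= length R0)%nat /\ NoDup reps /\
    (forall r, In r reps -> avoids S r) /\
    (forall r1 r2, In r1 reps -> In r2 reps -> conn S r1 r2 -> r1 = r2) /\
    (forall x r0, In r0 R0 -> conn S x r0 -> exists r, In r reps /\ conn S x r).
Proof.
  induction R0 as [|r0 R0 IH]; intros HR.
  { exists nil. split; [by []|split; [constructor|]].
    split; [intros ? []|split; [intros ? ? []|intros ? ? []]]. }
  destruct IH as [reps [Hlen [Hnd [Hav [Hdist Hrep]]]]]; [intros r Hr; apply HR; simpl; auto|].
  destruct (classic (exists r, In r reps /\ conn S r0 r)) as [[r [Hr Hc]]|Hnew].
  - exists reps. refine (conj _ (conj Hnd (conj Hav (conj Hdist _)))); [simpl; lia|].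
    intros x r1 [<-|Hr1] Hx; [|exact: Hrep Hr1 Hx].
    exists r. split; [exact Hr|exact: rst_trans Hx Hc].
  - exists (r0 :: reps). refine (conj _ (conj _ (conj _ (conj _ _)))); [simpl; lia| | | |].
    + constructor; [|exact Hnd]. intros Hr0. apply Hnew. exists r0. split; [exact Hr0|apply rst_refl].
    + intros r [<-|Hr]; [apply HR; simpl|]; auto.
    + intros r1 r2 [E1|Hr1] [E2|Hr2] Hc; subst; auto; exfalso; apply Hnew.
      * by exists r2.
      * exists r1. split; [exact Hr1|exact: rst_sym].
    + intros x r1 [E|Hr1] Hx; [subst r1; exists r0; simpl; auto|].
      destruct (Hrep x r1 Hr1 Hx) as [r [Hr Hxr]]. exists r. simpl; auto.
Qed.

Lemma covers_ncomponents (G : mgraph) (S : point G -> Prop) (R0 : list (point G)) :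
  covers S R0 -> exists k, (k <= length R0)%nat /\ has_ncomponents S k.
Proof.
  intros [Hav Hcov].
  destruct (distinct_representatives Hav) as [reps [Hlen [Hnd [Hav' [Hdist Hrep]]]]].
  exists (length reps). split; [exact Hlen|].
  exists reps. refine (conj Logic.eq_refl (conj Hnd (conj Hav' (conj Hdist _)))).
  intros x Hx. destruct (Hcov x Hx) as [r0 [Hr0 Hxr0]]. exact: Hrep Hr0 Hxr0.
Qed.

Lemma covers_extend (G : mgraph) (T : point G -> Prop) (reps : list (point G)) (c c' r0 : point G) :
  (forall r, In r reps -> avoids T r) -> avoids T c' -> In r0 reps -> conn T c r0 ->
  (forall x, avoids T x -> conn T x c \/ conn T x c' \/ exists r, In r reps /\ conn T x r) ->
  covers T (reps ++ c' :: nil).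
Proof.
  intros Hav Hc' Hr0 Hcr0 Hx. split.
  - intros r Hr. apply in_app_or in Hr. destruct Hr as [Hr|[<-|[]]]; auto.
  - intros x Hxa. destruct (Hx x Hxa) as [H|[H|[r [Hr H]]]].
    + exists r0. split; [apply in_or_app; auto|exact: rst_trans H Hcr0].
    + exists c'. split; [apply in_or_app; simpl; auto|exact H].
    + exists r. split; [apply in_or_app; auto|exact H].
Qed.

Lemma connected_covers (G : mgraph) (S : point G -> Prop) :
  (forall x y, avoids S x -> avoids S y -> conn S x y) ->
  exists R0, (length R0 <= 1)%nat /\ covers S R0.
Proof.
  intros Hc. destruct (classic (exists x0, avoids S x0)) as [[x0 Hx0]|Hno].
  - exists (x0 :: nil). split; [by []|split].
    + by intros r [<-|[]].
    + intros x Hx. exists x0. split; [simpl; auto|exact: Hc].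
  - exists nil. split; [by []|split; [intros r []|]].
    intros x Hx. exfalso. apply Hno. eauto.
Qed.

Lemma step_along_edge (G : mgraph) (T : point G -> Prop) (e : mE G) (u u' : R) :
  0 < u < mlen e -> 0 < u' < mlen e ->
  (forall s, Rmin u u' <= s <= Rmax u u' -> ~ T (PE e s)) ->
  step T (PE e u) (PE e u').
Proof.
  intros Hu Hu' Hs.
  have Hu_in : Rmin u u' <= u <= Rmax u u' by split; [apply Rmin_l|apply Rmax_l].
  have Hu'_in : Rmin u u' <= u' <= Rmax u u' by split; [apply Rmin_r|apply Rmax_r].
  split; [split; [exact Hu|exact: Hs]|split; [split; [exact Hu'|exact: Hs]|]].
  exists e, u. split; [reflexivity|]. left. by exists u'.
Qed.

Lemma step_to_src (G : mgraph) (T : point G -> Prop) (e : mE G) (u : R) :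
  0 < u < mlen e -> ~ T (PV (msrc e)) ->
  (forall s, 0 < s <= u -> ~ T (PE e s)) -> step T (PE e u) (PV (msrc e)).
Proof.
  intros Hu Hv Hs. split; [split; [exact Hu|apply Hs; lra]|split; [by split|]].
  exists e, u. split; [reflexivity|]. right; left. by split.
Qed.

Lemma step_to_tgt (G : mgraph) (T : point G -> Prop) (e : mE G) (u : R) :
  0 < u < mlen e -> ~ T (PV (mtgt e)) ->
  (forall s, u <= s < mlen e -> ~ T (PE e s)) -> step T (PE e u) (PV (mtgt e)).
Proof.
  intros Hu Hv Hs. split; [split; [exact Hu|apply Hs; lra]|split; [by split|]].
  exists e, u. split; [reflexivity|]. right; right. by split.
Qed.

Lemma step_antimono (G : mgraph) (T T' : point G -> Prop) (e : mE G) (u : R) (y : point G) :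
  (forall s, T' (PE e s) -> T (PE e s)) -> (forall v, T' (PV v) -> T (PV v)) ->
  step T (PE e u) y -> step T' (PE e u) y.
Proof.
  intros HE HV [[Hv1 Hx] [[Hv2 Hy] [e2 [u2 [Heq Hc]]]]].
  injection Heq as <- <-.
  destruct Hc as [[t' [-> Hs]]|[[-> Hs]|[-> Hs]]];
    (split; [split; [exact Hv1|intros H; apply Hx, HE, H]|]);
    (split; [split; [exact Hv2|intros H; apply Hy; auto]|]);
    exists e, u; (split; [reflexivity|]); [left; exists t'|right; left|right; right];
    (split; [reflexivity|intros s Hs' HT; exact: Hs s Hs' (HE s HT)]).
Qed.

Lemma isolating_radius (xs : list R) (t lo hi : R) : lo < t < hi ->
  exists r, 0 < r /\ lo < t - r /\ t + r < hi /\
    forall x, In x xs -> x <> t -> x < t - r \/ t + r < x.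
Proof.
  intros Ht. induction xs as [|x xs IH].
  - exists (Rmin (t - lo) (hi - t) / 2).
    have H1 := Rmin_l (t - lo) (hi - t). have H2 := Rmin_r (t - lo) (hi - t).
    have : 0 < Rmin (t - lo) (hi - t) by apply Rmin_glb_lt; lra.
    split; [lra|split; [lra|split; [lra|by intros ? []]]].
  - destruct IH as [r [Hr [Hlo [Hhi Hsep]]]].
    destruct (Req_dec x t) as [->|Hne].
    + exists r. split; [exact Hr|split; [exact Hlo|split; [exact Hhi|]]].
      intros y [<-|Hy] Hne; [tauto|auto].
    + have Habs : 0 < Rabs (x - t) by apply Rabs_pos_lt; lra.
      have H1 := Rmin_l r (Rabs (x - t) / 2). have H2 := Rmin_r r (Rabs (x - t) / 2).
      have Hr' : 0 < Rmin r (Rabs (x - t) / 2) by apply Rmin_glb_lt; lra.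
      exists (Rmin r (Rabs (x - t) / 2)). split; [exact Hr'|split; [lra|split; [lra|]]].
      intros y [<-|Hy] Hxt; [|destruct (Hsep y Hy Hxt); [left|right]; lra].
      destruct (Rlt_or_le x t) as [Hlt|Hge].
      * have := Rabs_left (x - t) ltac:(lra). left; lra.
      * have := Rabs_right (x - t) ltac:(lra). right; lra.
Qed.

(* Removing the point [p = PE e t] from [Γ \ S]: a path of [Γ \ S] through [p] is rerouted
   through the bridge [a -- b] between the two nearby points [a, b] on either side of [p],
   so the old components survive and at most one new one appears. *)
Section RemoveIsolatedPoint.
Variables (G : mgraph) (S : point G -> Prop) (e : mE G) (t r : R).
Hypothesis t_interior : 0 < t < mlen e.
Hypothesis t_notin : ~ S (PE e t).
Hypothesis r_pos : 0 < r.
Hypothesis r_lo : 0 < t - r.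
Hypothesis r_hi : t + r < mlen e.
Hypothesis isolated : forall s, t - r <= s <= t + r -> s <> t -> ~ S (PE e s).

Let p : point G := PE e t.
Let a : point G := PE e (t - r).
Let b : point G := PE e (t + r).
Let S' (x : point G) : Prop := p = x \/ S x.
Let bridged (x y : point G) : Prop := step S' x y \/ (x = a /\ y = b).
Let bconn := clos_refl_sym_trans _ bridged.
Let push (z : point G) : point G := if excluded_middle_informative (z = p) then a else z.

Lemma push_p : push p = a.
Proof. rewrite /push. by case: excluded_middle_informative. Qed.

Lemma push_id z : z <> p -> push z = z.
Proof. rewrite /push. by case: excluded_middle_informative. Qed.

Lemma edge_point_ne u : u <> t -> PE e u <> p.
Proof. by intros Hu [= Hut]. Qed.

Lemma not_S' x : x <> p -> ~ S x -> ~ S' x.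
Proof. by intros Hp Hs [Hx|Hx]; [apply Hp|apply Hs]. Qed.

Lemma near_not_S' s : t - r <= s <= t + r -> s <> t -> ~ S' (PE e s).
Proof. intros Hs Hst. apply not_S'; [exact: edge_point_ne|exact: isolated]. Qed.

Lemma avoids_a : avoids S' a.
Proof. split; [simpl; lra|]. apply near_not_S'; lra. Qed.

Lemma avoids_b : avoids S' b.
Proof. split; [simpl; lra|]. apply near_not_S'; lra. Qed.

Lemma bconn_step x y : step S' x y -> bconn x y.
Proof. by intros H; apply rst_step; left. Qed.

Lemma bconn_ab : bconn a b.
Proof. by apply rst_step; right. Qed.

Lemma push_left u : 0 < u <= t -> (forall s, u <= s <= t -> ~ S (PE e s)) ->
  bconn (push (PE e u)) a.
Proof.
  intros Hu Hfree. destruct (Req_dec u t) as [->|Hne]; [rewrite push_p; apply rst_refl|].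
  rewrite push_id; [|exact: edge_point_ne]. apply bconn_step, step_along_edge; [lra|lra|].
  have Hmax : Rmax u (t - r) < t by apply Rmax_lub_lt; lra.
  have Hmin : Rmin u (t - r) = u \/ Rmin u (t - r) = t - r.
  { rewrite /Rmin. case: Rle_dec; auto. }
  intros s Hs. destruct (Rle_dec u s).
  - apply not_S'; [apply edge_point_ne; lra|apply Hfree; lra].
  - apply near_not_S'; lra.
Qed.

Lemma push_right u : t <= u < mlen e -> (forall s, t <= s <= u -> ~ S (PE e s)) ->
  bconn (push (PE e u)) b.
Proof.
  intros Hu Hfree. destruct (Req_dec u t) as [->|Hne]; [rewrite push_p; exact bconn_ab|].
  rewrite push_id; [|exact: edge_point_ne]. apply bconn_step, step_along_edge; [lra|lra|].
  have Hmin : t < Rmin u (t + r) by apply Rmin_glb_lt; lra.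
  have Hmax : Rmax u (t + r) = u \/ Rmax u (t + r) = t + r.
  { rewrite /Rmax. case: Rle_dec; auto. }
  intros s Hs. destruct (Rle_dec s u).
  - apply not_S'; [apply edge_point_ne; lra|apply Hfree; lra].
  - apply near_not_S'; lra.
Qed.

Lemma push_step_off_edge e1 u w : e1 <> e -> step S (PE e1 u) w -> bconn (push (PE e1 u)) (push w).
Proof.
  intros He Hst. have Hoff s : PE e1 s <> p by intros [= He1]; apply He.
  have Hw : push w = w.
  { apply push_id. destruct Hst as [_ [_ [e2 [u2 [[= <- <-] Hc]]]]].
    by destruct Hc as [[t' [-> _]]|[[-> _]|[-> _]]]. }
  rewrite push_id // Hw. apply bconn_step. apply: step_antimono Hst.
  - by intros s [Hp|Hs]; [exfalso; apply (Hoff s)|].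
  - by intros v [Hp|Hv].
Qed.

Lemma push_step_along_edge u u' : 0 < u < mlen e -> 0 < u' < mlen e ->
  (forall s, Rmin u u' <= s <= Rmax u u' -> ~ S (PE e s)) ->
  bconn (push (PE e u)) (push (PE e u')).
Proof.
  intros Hu Hu' Hfree.
  have Hmm : (Rmin u u' = u /\ Rmax u u' = u') \/ (Rmin u u' = u' /\ Rmax u u' = u).
  { rewrite /Rmin /Rmax. case: Rle_dec; auto. }
  destruct (classic (Rmin u u' <= t <= Rmax u u')) as [Hin|Hout].
  - destruct (Rle_dec u u').
    + apply rst_trans with a; [apply push_left; [lra|intros s Hs; apply Hfree; lra]|].
      apply rst_trans with b; [exact bconn_ab|]. apply rst_sym.
      apply push_right; [lra|intros s Hs; apply Hfree; lra].
    + apply rst_trans with b; [apply push_right; [lra|intros s Hs; apply Hfree; lra]|].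
      apply rst_trans with a; [apply rst_sym; exact bconn_ab|]. apply rst_sym.
      apply push_left; [lra|intros s Hs; apply Hfree; lra].
  - have Hsep s : Rmin u u' <= s <= Rmax u u' -> s <> t by intros Hs ->; apply Hout.
    have Hu_ne : u <> t by apply Hsep; split; [apply Rmin_l|apply Rmax_l].
    have Hu'_ne : u' <> t by apply Hsep; split; [apply Rmin_r|apply Rmax_r].
    rewrite (push_id (edge_point_ne Hu_ne)) (push_id (edge_point_ne Hu'_ne)).
    apply bconn_step, step_along_edge; [exact Hu|exact Hu'|].
    intros s Hs. apply not_S'; [exact: edge_point_ne (Hsep s Hs)|exact: Hfree].
Qed.

Lemma push_step_to_src u : 0 < u < mlen e -> ~ S (PV (msrc e)) ->
  (forall s, 0 < s <= u -> ~ S (PE e s)) -> bconn (push (PE e u)) (push (PV (msrc e))).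
Proof.
  intros Hu Hv Hfree. rewrite (push_id (z := PV _)) //.
  have Hv' : ~ S' (PV (msrc e)) by apply not_S'.
  destruct (Rlt_dec u t).
  - rewrite push_id; [|apply edge_point_ne; lra].
    apply bconn_step, step_to_src; [exact Hu|exact Hv'|].
    intros s Hs. apply not_S'; [apply edge_point_ne; lra|exact: Hfree].
  - apply rst_trans with b; [apply push_right; [lra|intros s Hs; apply Hfree; lra]|].
    apply rst_trans with a; [apply rst_sym; exact bconn_ab|].
    apply bconn_step, step_to_src; [lra|exact Hv'|].
    intros s Hs. apply not_S'; [apply edge_point_ne; lra|apply Hfree; lra].
Qed.

Lemma push_step_to_tgt u : 0 < u < mlen e -> ~ S (PV (mtgt e)) ->
  (forall s, u <= s < mlen e -> ~ S (PE e s)) -> bconn (push (PE e u)) (push (PV (mtgt e))).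
Proof.
  intros Hu Hv Hfree. rewrite (push_id (z := PV _)) //.
  have Hv' : ~ S' (PV (mtgt e)) by apply not_S'.
  destruct (Rlt_dec t u).
  - rewrite push_id; [|apply edge_point_ne; lra].
    apply bconn_step, step_to_tgt; [exact Hu|exact Hv'|].
    intros s Hs. apply not_S'; [apply edge_point_ne; lra|exact: Hfree].
  - apply rst_trans with a; [apply push_left; [lra|intros s Hs; apply Hfree; lra]|].
    apply rst_trans with b; [exact bconn_ab|].
    apply bconn_step, step_to_tgt; [lra|exact Hv'|].
    intros s Hs. apply not_S'; [apply edge_point_ne; lra|apply Hfree; lra].
Qed.

Lemma push_conn z w : conn S z w -> bconn (push z) (push w).
Proof.
  induction 1 as [z w Hst| |z w _ IH|z y w _ IH1 _ IH2];
    [|apply rst_refl|exact: rst_sym|exact: rst_trans IH1 IH2].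
  pose proof Hst as [[Hz _] [[Hw_valid Hw_free] [e1 [u [-> Hc]]]]].
  destruct (classic (e1 = e)) as [->|He]; [|exact: push_step_off_edge].
  destruct Hc as [[u' [-> Hs]]|[[-> Hs]|[-> Hs]]].
  - exact: push_step_along_edge Hz Hw_valid Hs.
  - exact: push_step_to_src Hz Hw_free Hs.
  - exact: push_step_to_tgt Hz Hw_free Hs.
Qed.

Lemma bconn_cases x y : bconn x y ->
  conn S' x y \/ (conn S' x a /\ conn S' b y) \/ (conn S' x b /\ conn S' a y).
Proof.
  induction 1 as [x y [Hst|[-> ->]]|x|x y _ IH|x y z _ IH1 _ IH2].
  - left. exact: rst_step.
  - right; left. split; apply rst_refl.
  - left. apply rst_refl.
  - destruct IH as [H|[[H1 H2]|[H1 H2]]]; [left|right; right|right; left];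
      (try split); exact: rst_sym.
  - destruct IH1 as [H1|[[H1 H2]|[H1 H2]]]; destruct IH2 as [H3|[[H3 H4]|[H3 H4]]];
      first [ left; exact: rst_trans H1 H3
            | left; exact: rst_trans H1 H4
            | right; left; split; [exact: rst_trans H1 H3|exact H4]
            | right; left; split; [exact H1|exact: rst_trans H2 H3]
            | right; left; split; [exact H1|exact H4]
            | right; right; split; [exact: rst_trans H1 H3|exact H4]
            | right; right; split; [exact H1|exact: rst_trans H2 H3]
            | right; right; split; [exact H1|exact H4] ].
Qed.

Lemma covers_add_point (R0 : list (point G)) :
  covers S R0 -> exists R1, (length R1 <= (length R0).+1)%nat /\ covers S' R1.
Proof.
  intros [Hav Hcov].
  have Hav' q : In q (map push R0) -> avoids S' q.
  { intros Hq. apply in_map_iff in Hq. destruct Hq as [r0 [<- Hr0]].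
    destruct (classic (r0 = p)) as [->|Hne]; [rewrite push_p; exact avoids_a|].
    rewrite push_id //. destruct (Hav r0 Hr0) as [Hv Hs]. split; [exact Hv|exact: not_S']. }
  have Hx x : avoids S' x -> conn S' x a \/ conn S' x b \/
      exists q, In q (map push R0) /\ conn S' x q.
  { intros [Hxv Hxs]. have Hxp : x <> p by intros ->; apply Hxs; left.
    destruct (Hcov x) as [r0 [Hr0 Hc]]; [by split; [|intros H; apply Hxs; right]|].
    have := bconn_cases (push_conn Hc). rewrite push_id //.
    intros [H|[[H _]|[H _]]]; auto. right; right. exists (push r0). split; [exact: in_map|exact H]. }
  destruct (Hcov p) as [rp [Hrp Hcp]]; [by split|].
  have Hlen c' : (length (map push R0 ++ c' :: nil) <= (length R0).+1)%nat.
  { rewrite length_app length_map /=. lia. }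
  have := bconn_cases (push_conn Hcp). rewrite push_p.
  have Hin := in_map push R0 rp Hrp.
  intros [Hc|[[_ Hc]|[_ Hc]]].
  - exists (map push R0 ++ b :: nil). split; [exact: Hlen|]. exact: covers_extend Hav' avoids_b Hin Hc Hx.
  - exists (map push R0 ++ a :: nil). split; [exact: Hlen|].
    apply: covers_extend Hav' avoids_a Hin Hc _. intros x Hxa. have := Hx x Hxa. tauto.
  - exists (map push R0 ++ b :: nil). split; [exact: Hlen|]. exact: covers_extend Hav' avoids_b Hin Hc Hx.
Qed.

End RemoveIsolatedPoint.

Definition edge_param (G : mgraph) (x : point G) : R :=
  match x with PE _ s => s | PV _ => 0 end.

Lemma covers_remove_points (G : mgraph) (base l R0 : list (point G)) :
  covers (fun x => In x base) R0 -> NoDup (l ++ base) ->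
  (forall x, In x (l ++ base) -> interior_point x) ->
  exists R1, (length R1 <= length R0 + length l)%nat /\ covers (fun x => In x (l ++ base)) R1.
Proof.
  intros Hcov. induction l as [|x l IH]; intros Hnd Hint.
  { exists R0. split; [simpl; lia|exact Hcov]. }
  inversion Hnd as [|? ? Hx Hnd']; subst.
  destruct IH as [R1 [Hlen1 Hcov1]]; [exact Hnd'|intros y Hy; apply Hint; simpl; auto|].
  destruct (Hint x (or_introl Logic.eq_refl)) as [e [t [-> Ht]]].
  destruct (isolating_radius (map (@edge_param G) (l ++ base)) Ht) as [r [Hr [Hlo [Hhi Hsep]]]].
  have Hiso s : t - r <= s <= t + r -> s <> t -> ~ In (PE e s) (l ++ base).
  { intros Hs Hst Hin. have := Hsep s (in_map (@edge_param G) _ _ Hin) Hst. lra. }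
  destruct (covers_add_point Ht Hx Hr Hlo Hhi Hiso Hcov1) as [R2 [Hlen2 Hcov2]].
  exists R2. split; [simpl; lia|exact Hcov2].
Qed.

Lemma pred_ext (G : mgraph) (S1 S2 : point G -> Prop) : (forall x, S1 x <-> S2 x) -> S1 = S2.
Proof.
  intros H. apply functional_extensionality. intros x. apply propositional_extensionality, H.
Qed.

Lemma ncomponents_connected (G : mgraph) (s : list (point G)) :
  gconnected G -> NoDup s -> (forall x, In x s -> interior_point x) ->
  exists k, (k <= (length s).+1)%nat /\ has_ncomponents (fun x => In x s) k.
Proof.
  intros Hg Hnd Hint.
  destruct (@connected_covers G (fun x => In x nil)) as [R0 [Hlen0 Hcov0]].
  { intros x y [Hx _] [Hy _]. exact: Hg. }
  rewrite -(app_nil_r s) in Hnd Hint.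
  destruct (covers_remove_points Hcov0 Hnd Hint) as [R1 [Hlen1 Hcov1]].
  destruct (covers_ncomponents Hcov1) as [k [Hk Hcomp]].
  rewrite app_nil_r in Hcomp. exists k. split; [lia|exact Hcomp].
Qed.

Lemma ncomponents_two_connected (G : mgraph) (s : list (point G)) :
  two_connected G -> NoDup s -> s <> nil -> (forall x, In x s -> interior_point x) ->
  exists k, (k <= length s)%nat /\ has_ncomponents (fun x => In x s) k.
Proof.
  intros [_ H2] Hnd Hne Hint. destruct s as [|p l]; [by []|].
  have Hp_in : forall x, In x (p :: nil) <-> x = p by intros x; simpl; intuition.
  destruct (@connected_covers G (fun x => In x (p :: nil))) as [R0 [Hlen0 Hcov0]].
  { rewrite (pred_ext Hp_in). apply H2. exact: interior_point_valid (Hint p (or_introl Logic.eq_refl)). }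
  have Hperm := Permutation_cons_append l p.
  have Hsame : (fun x => In x (l ++ p :: nil)) = (fun x => In x (p :: l)).
  { apply pred_ext. intros x. split; apply Permutation_in; [apply Permutation_sym|]; exact Hperm. }
  destruct (@covers_remove_points G (p :: nil) l R0 Hcov0) as [R1 [Hlen1 Hcov1]].
  - exact: Permutation_NoDup Hperm Hnd.
  - intros x Hx. apply Hint. exact: Permutation_in (Permutation_sym Hperm) Hx.
  - rewrite Hsame in Hcov1. destruct (covers_ncomponents Hcov1) as [k [Hk Hcomp]].
    exists k. split; [simpl; lia|exact Hcomp].
Qed.

Theorem corollary2p5 (G : mgraph) (D : point G -> Z) (d : Z) :
  gconnected G -> effective D -> vertex_supported D -> is_degree D d ->
  linsys_dim_le D d /\
  (two_connected G -> (0 < d)%Z -> linsys_dim_le D (d - 1)).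
Proof.
  intros Hg Heff Hvs Hdeg. split.
  - intros L HL. destruct (IL_length_le_degree Heff Hvs Hdeg HL) as [s [Hnd [Hs [Hint Hlen]]]].
    rewrite (pred_ext Hs).
    destruct (ncomponents_connected Hg Hnd Hint) as [k [Hk Hcomp]].
    exists k. split; [exact Hcomp|lia].
  - intros H2 Hd L HL. destruct (IL_length_le_degree Heff Hvs Hdeg HL) as [s [Hnd [Hs [Hint Hlen]]]].
    rewrite (pred_ext Hs).
    destruct (classic (s = nil)) as [->|Hne].
    + destruct (ncomponents_connected Hg Hnd Hint) as [k [Hk Hcomp]].
      exists k. split; [exact Hcomp|simpl in Hk; lia].
    + destruct (ncomponents_two_connected H2 Hnd Hne Hint) as [k [Hk Hcomp]].
      exists k. split; [exact Hcomp|lia].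
Qed.
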